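(* Let $\Lambda$ be a Euclidean lattice of minimum $m$ and rank $d$ containing two distinct sublattices $\Lambda'$ and $\Lambda''$ which are both perfect, of minimum $m$ and of rank $d-1$. Suppose that $\Lambda'+\Lambda''$ has rank $d$, and that $\Lambda$ contains a minimal vector $v$ such that $\mathbb Qv\cap\Lambda'=\mathbb Qv\cap\Lambda''=\{0\}$. Then $\Lambda$ is perfect.
   Context: The minimum of a lattice is the smallest squared Euclidean norm of a nonzero element; minimal vectors are the nonzero elements realising it. A lattice $L$ of rank $n$ is perfect if $\{v\otimes v\}$, $v$ ranging over its minimal vectors, spans the $\binom{n+1}{2}$-dimensional space of symmetric tensors in $(L\otimes\mathbb R)\otimes(L\otimes\mathbb R)$. *)

(* Euclidean lattices in the row space 'rV[R]_N over an
   ordered field R, given by a basis matrix. *)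
From HB Require Import structures.
From mathcomp Require Import all_boot all_order all_algebra.
Set Implicit Arguments. Unset Strict Implicit. Unset Printing Implicit Defensive.
Import Order.TTheory GRing.Theory Num.Theory.
Local Open Scope ring_scope.

Section Lattices.
Variables (R : realFieldType) (N : nat).

Definition sqnorm (v : 'rV[R]_N) : R := (v *m v^T) 0 0.

Definition in_lat k (B : 'M[R]_(k, N)) (u : 'rV[R]_N) : Prop :=
  exists z : 'I_k -> int, u = \sum_(i < k) (z i)%:~R *: row i B.

Definition lattice_basis k (B : 'M[R]_(k, N)) : Prop := row_free B.

Definition min_vec k (B : 'M[R]_(k, N)) (u : 'rV[R]_N) : Prop :=
  [/\ in_lat B u, u != 0 &
      forall w, in_lat B w -> w != 0 -> sqnorm u <= sqnorm w].

Definition lat_min k (B : 'M[R]_(k, N)) (m : R) : Prop :=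
  exists u, min_vec B u /\ sqnorm u = m.

(* tensor v (x) v, realised in 'M_N = R^N (x) R^N *)
Definition tens (v : 'rV[R]_N) : 'M[R]_N := v^T *m v.

(* symmetric tensors in (L (x) R) (x) (L (x) R) : sum_{i,j} a_ij b_i (x) b_j
   with a symmetric, b_i the basis vectors *)
Definition sym_tensor k (B : 'M[R]_(k, N)) (T : 'M[R]_N) : Prop :=
  exists a : 'M[R]_k, a^T = a /\
    T = \sum_(i < k) \sum_(j < k) a i j *: ((row i B)^T *m row j B).

Definition in_min_span k (B : 'M[R]_(k, N)) (T : 'M[R]_N) : Prop :=
  exists n (w : 'I_n -> 'rV[R]_N) (c : 'I_n -> R),
    (forall i, min_vec B (w i)) /\ T = \sum_(i < n) c i *: tens (w i).

Definition perfect k (B : 'M[R]_(k, N)) : Prop :=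
  forall T, in_min_span B T <-> sym_tensor B T.

Definition sublat k k' (B' : 'M[R]_(k', N)) (B : 'M[R]_(k, N)) : Prop :=
  forall u, in_lat B' u -> in_lat B u.

Definition same_lat k k' (B' : 'M[R]_(k', N)) (B : 'M[R]_(k, N)) : Prop :=
  forall u, in_lat B' u <-> in_lat B u.

End Lattices.

From HB Require Import structures.
From mathcomp Require Import all_boot all_order all_algebra.
From mathcomp Require Import ring.
Set Implicit Arguments. Unset Strict Implicit. Unset Printing Implicit Defensive.
Import Order.TTheory GRing.Theory Num.Theory.
Local Open Scope ring_scope.

(* Write B1 = Z1 B, B2 = Z2 B and v = z B with integral coordinates.  The
   rank condition makes the row spaces H1, H2 of Z1, Z2 two distinct
   hyperplanes, and as Qv meets neither sublattice, z lies in neither of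
   them (over Q, hence over R).  Then every symmetric form is a sum of forms
   on H1 and on H2 and a multiple of z(x)z: with f_i a linear form vanishing
   on H_i, subtract c z(x)z from a so that a(f1, f2) = 0, and split the rest
   into a form killing f1 and one killing f2.  As B1 and B2 are perfect with
   the same minimum as B, their minimal vectors are minimal in B, so all
   three summands lie in the span of the v(x)v. *)

Lemma row_free_mulmxl (F : fieldType) m n p (A : 'M[F]_(m, n)) (B : 'M[F]_(n, p)) :
  row_free (A *m B) -> row_free A.
Proof. by rewrite -!row_leq_rank => /leq_trans; apply; apply: mxrankM_maxl. Qed.

Section SymmetricForms.
Variables (F : fieldType) (d : nat).

Lemma sym_submx_factor m (Z : 'M[F]_(m, d)) (s : 'M[F]_d) :
  s^T = s -> (s <= Z)%MS -> exists a : 'M_m, a^T = a /\ s = Z^T *m a *m Z.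
Proof.
move=> sym_s /mulmxKpV; move: (pinvmx Z) => P sPZ.
exists (P^T *m s *m P); split; first by rewrite !trmx_mul trmxK sym_s mulmxA.
have ZPs : Z^T *m P^T *m s = s.
  by rewrite -[RHS]sym_s -[in RHS]sPZ !trmx_mul sym_s mulmxA.
by rewrite -!mulmxA (mulmxA s) sPZ mulmxA ZPs.
Qed.

Lemma notin_submx_annihilator m (Z : 'M[F]_(m, d)) (z : 'rV[F]_d) :
  ~~ (z <= Z)%MS -> exists f : 'cV_d, Z *m f = 0 /\ (z *m f) 0 0 != 0.
Proof.
rewrite submxE => zZ.
have [j zj] : exists j, (z *m cokermx Z) 0 j != 0.
  apply/existsP; apply: contraR zZ; rewrite negb_exists => /forallP z0.
  by apply/eqP/matrixP => i j; rewrite ord1 [RHS]mxE; exact/eqP/negPn/z0.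
exists (col j (cokermx Z)); split; first by rewrite colE mulmxA mulmx_coker mul0mx.
by rewrite colE mulmxA -colE mxE.
Qed.

Lemma hyperplane_ker_submx (Z : 'M[F]_(d.-1, d)) (f : 'cV[F]_d) :
  row_free Z -> Z *m f = 0 -> f != 0 ->
  forall p (s : 'M_(p, d)), s *m f = 0 -> (s <= Z)%MS.
Proof.
move=> freeZ Zf f_neq0 p s sf; apply: submx_trans (_ : kermx f <= Z)%MS.
  exact/sub_kermxP.
have Zker : (Z <= kermx f)%MS by apply/sub_kermxP.
rewrite -(mxrank_leqif_sup Zker).2 eqn_leq mxrankS //= mxrank_ker (eqP freeZ).
by rewrite -subn1 leq_sub2l // lt0n mxrank_eq0.
Qed.

Lemma separating_row m (Z : 'M[F]_(m, d)) (f1 f2 : 'cV[F]_d) :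
  Z *m f1 != 0 -> Z *m f2 = 0 -> exists s : 'rV_d, s *m f1 = 1 /\ s *m f2 = 0.
Proof.
move=> Zf1 Zf2; have [i Zf1_i] : exists i, (Z *m f1) i 0 != 0.
  apply/existsP; apply: contraR Zf1; rewrite negb_exists => /forallP Z0.
  by apply/eqP/matrixP => i j; rewrite ord1 [RHS]mxE; exact/eqP/negPn/Z0.
exists (((Z *m f1) i 0)^-1 *: row i Z); split.
  rewrite -scalemxAl -row_mul; apply/matrixP => x y; rewrite !ord1.
  by rewrite [LHS]mxE [X in _ * X]mxE [RHS]mxE mulVf.
by rewrite -scalemxAl -row_mul Zf2 row0 scaler0.
Qed.

Lemma sym_split_annihilators (a : 'M[F]_d) (f1 f2 : 'cV[F]_d) (s : 'rV[F]_d) :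
  a^T = a -> f1^T *m a *m f2 = 0 -> s *m f1 = 1 -> s *m f2 = 0 ->
  exists a1 a2, [/\ a1^T = a1, a2^T = a2, a1 *m f1 = 0, a2 *m f2 = 0 & a = a1 + a2].
Proof.
move=> sym_a rf2 sf1 sf2; have rT : (f1^T *m a)^T = a *m f1 by rewrite trmx_mul sym_a trmxK.
move: (f1^T *m a) rf2 rT => r rf2 rT.
have rf1T : f1^T *m r^T = r *m f1.
  by rewrite -trmx_mul [r *m f1]mx11_scalar tr_scalar_mx.
(* a2 agrees with a on f1 and kills f2; s is dual to f1 on <f1, f2>. *)
set a2 := s^T *m r + r^T *m s - s^T *m (r *m f1) *m s.
have sym_a2 : a2^T = a2.
  by rewrite /a2 linearB linearD /= !trmx_mul !trmxK rf1T (addrC (_ *m s)) mulmxA.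
have a2f1 : a2 *m f1 = r^T.
  by rewrite /a2 mulmxBl mulmxDl -!mulmxA sf1 !mulmx1 mulmxA addrAC subrr add0r.
have a2f2 : a2 *m f2 = 0.
  by rewrite /a2 mulmxBl mulmxDl -!mulmxA sf2 rf2 !mulmx0 !addr0 subr0.
exists (a - a2), a2; split=> //; last by rewrite subrK.
  by rewrite linearB /= sym_a sym_a2.
by rewrite mulmxBl a2f1 rT subrr.
Qed.

Lemma rank_one_correction (a : 'M[F]_d) (f1 f2 : 'cV[F]_d) (z : 'rV[F]_d) :
  (z *m f1) 0 0 != 0 -> (z *m f2) 0 0 != 0 ->
  exists c, f1^T *m (a - c *: (z^T *m z)) *m f2 = 0.
Proof.
move=> zf1 zf2; set al := (z *m f1) 0 0 in zf1 *; set be := (z *m f2) 0 0 in zf2 *.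
set X := (f1^T *m a *m f2) 0 0; exists (X / (al * be)).
have zz : f1^T *m (z^T *m z) *m f2 = (al * be)%:M.
  transitivity ((z *m f1)^T *m (z *m f2)); first by rewrite trmx_mul !mulmxA.
  by rewrite [z *m f1]mx11_scalar [z *m f2]mx11_scalar tr_scalar_mx -scalar_mxM.
rewrite mulmxBr mulmxBl -scalemxAr -scalemxAl zz [f1^T *m a *m f2]mx11_scalar.
by rewrite -/X scale_scalar_mx -raddfB /= divfK ?subrr ?raddf0 ?mulf_neq0.
Qed.

Lemma sym_decomp_hyperplanes (Z1 Z2 : 'M[F]_(d.-1, d)) (z : 'rV[F]_d) (a : 'M[F]_d) :
  row_free Z1 -> row_free Z2 -> ~~ (Z2 <= Z1)%MS ->
  ~~ (z <= Z1)%MS -> ~~ (z <= Z2)%MS -> a^T = a ->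
  exists a1 a2 c, [/\ a1^T = a1, a2^T = a2 &
    a = Z1^T *m a1 *m Z1 + Z2^T *m a2 *m Z2 + c *: (z^T *m z)].
Proof.
move=> free1 free2 Z21 zZ1 zZ2 sym_a.
have [f1 [Z1f1 zf1]] := notin_submx_annihilator zZ1.
have [f2 [Z2f2 zf2]] := notin_submx_annihilator zZ2.
have f1_neq0 : f1 != 0 by apply: contraNneq zf1 => ->; rewrite mulmx0 mxE.
have f2_neq0 : f2 != 0 by apply: contraNneq zf2 => ->; rewrite mulmx0 mxE.
have ker1 := hyperplane_ker_submx free1 Z1f1 f1_neq0.
have ker2 := hyperplane_ker_submx free2 Z2f2 f2_neq0.
have Z2f1 : Z2 *m f1 != 0 by apply: contra Z21 => /eqP; apply: ker1.
have [s [sf1 sf2]] := separating_row Z2f1 Z2f2.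
have [c af12] := rank_one_correction a zf1 zf2.
have sym_a' : (a - c *: (z^T *m z))^T = a - c *: (z^T *m z).
  by rewrite linearB linearZ /= trmx_mul trmxK sym_a.
have [s1 [s2 [sym_s1 sym_s2 s1f1 s2f2 Ea]]] :=
  sym_split_annihilators sym_a' af12 sf1 sf2.
have [a1 [sym_a1 Es1]] := sym_submx_factor sym_s1 (ker1 _ _ s1f1).
have [a2 [sym_a2 Es2]] := sym_submx_factor sym_s2 (ker2 _ _ s2f2).
by exists a1, a2, c; rewrite -Es1 -Es2 -Ea subrK.
Qed.

Lemma col_mx_rank_not_submx N (Z1 Z2 : 'M[F]_(d.-1, d)) (B : 'M[F]_(d, N)) :
  (0 < d)%N -> \rank (col_mx (Z1 *m B) (Z2 *m B)) = d -> ~~ (Z2 <= Z1)%MS.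
Proof.
move=> d_gt0 rkB; apply/negP => Z21.
suff : (d <= d.-1)%N by rewrite leqNgt ltn_predL d_gt0.
rewrite -{1}rkB -mul_col_mx; apply: leq_trans (mxrankM_maxl _ _) _.
apply: leq_trans (rank_leq_row Z1); apply: mxrankS.
by rewrite col_mx_sub submx_refl.
Qed.

End SymmetricForms.

Section LatticeTensors.
Variables (R : realFieldType) (N : nat).

Lemma sym_tensor_sumE k (B : 'M[R]_(k, N)) (a : 'M[R]_k) :
  \sum_(i < k) \sum_(j < k) a i j *: ((row i B)^T *m row j B) = B^T *m a *m B.
Proof.
rewrite [in RHS](matrix_sum_delta a) mulmx_sumr mulmx_suml; apply: eq_bigr => i _.
rewrite mulmx_sumr mulmx_suml; apply: eq_bigr => j _.
rewrite -scalemxAr -scalemxAl; congr (_ *: _).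
by rewrite !rowE trmx_mul trmx_delta !mulmxA -(mulmxA _ (delta_mx i 0)) mul_delta_mx.
Qed.

Lemma sym_tensorP k (B : 'M[R]_(k, N)) T :
  sym_tensor B T <-> exists a, a^T = a /\ T = B^T *m a *m B.
Proof. by split=> -[a [sym_a ->]]; exists a; rewrite sym_tensor_sumE. Qed.

Lemma in_latP k (B : 'M[R]_(k, N)) u :
  in_lat B u <-> exists z : 'rV[int]_k, u = map_mx intr z *m B.
Proof.
split=> [[z ->] | [z ->]]; [exists (\row_i z i) | exists (z 0)];
  by rewrite mulmx_sum_row; apply: eq_bigr => i _; rewrite !mxE.
Qed.

Lemma in_lat_row k (B : 'M[R]_(k, N)) i : in_lat B (row i B).
Proof. by apply/in_latP; exists (delta_mx 0 i); rewrite map_delta_mx -rowE. Qed.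

Lemma sublat_coord k k' (B : 'M[R]_(k, N)) (B' : 'M[R]_(k', N)) :
  sublat B' B -> exists Z : 'M[int]_(k', k), B' = map_mx intr Z *m B.
Proof.
move=> subB; have /fin_all_exists[z Ez] : forall i, exists z : 'rV[int]_k,
    row i B' = map_mx intr z *m B by move=> i; apply/in_latP/subB/in_lat_row.
by exists (\matrix_i z i); apply/row_matrixP => i; rewrite row_mul -map_row rowK Ez.
Qed.

Lemma min_vec_sublat k k' (B : 'M[R]_(k, N)) (B' : 'M[R]_(k', N)) m w :
  sublat B' B -> lat_min B' m -> lat_min B m -> min_vec B' w -> min_vec B w.
Proof.
move=> subB [u' [[u'_in u'_neq0 _] <-]] [u [[_ _ u_min] um]] [w_in w_neq0 w_min].
split=> [|//|x x_in x_neq0]; first exact: subB.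
by apply: le_trans (u_min x x_in x_neq0); rewrite um; apply: w_min.
Qed.

Lemma in_min_spanD k (B : 'M[R]_(k, N)) T1 T2 :
  in_min_span B T1 -> in_min_span B T2 -> in_min_span B (T1 + T2).
Proof.
move=> [n1 [w1 [c1 [w1_min ->]]]] [n2 [w2 [c2 [w2_min ->]]]].
pose w i := match split i with inl j => w1 j | inr j => w2 j end.
pose c i := match split i with inl j => c1 j | inr j => c2 j end.
exists (n1 + n2)%N, w, c; split=> [i|]; first by rewrite /w; case: split.
by rewrite big_split_ord /w /c; congr (_ + _); apply: eq_bigr => i _;
  [rewrite (unsplitK (inl i)) | rewrite (unsplitK (inr i))].
Qed.

Lemma in_min_span_tens k (B : 'M[R]_(k, N)) w c :
  min_vec B w -> in_min_span B (c *: tens w).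
Proof. by move=> w_min; exists 1%N, (fun=> w), (fun=> c); rewrite big_ord1. Qed.

Lemma in_min_span_sub k k' (B : 'M[R]_(k, N)) (B' : 'M[R]_(k', N)) T :
  (forall w, min_vec B' w -> min_vec B w) -> in_min_span B' T -> in_min_span B T.
Proof. by move=> minB [n [w [c [w_min ->]]]]; exists n, w, c; split=> // i; apply: minB. Qed.

Lemma in_min_span_sym k (B : 'M[R]_(k, N)) T : in_min_span B T -> sym_tensor B T.
Proof.
move=> [n [w [c [w_min ->]]]]; apply/sym_tensorP.
have /fin_all_exists[z Ez] : forall i, exists z : 'rV[int]_k, w i = map_mx intr z *m B.
  by move=> i; case: (w_min i) => /in_latP.
exists (\sum_i c i *: ((map_mx intr (z i))^T *m map_mx intr (z i))); split.
  by rewrite raddf_sum; apply: eq_bigr => i _ /=; rewrite linearZ /= trmx_mul trmxK.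
rewrite mulmx_sumr mulmx_suml; apply: eq_bigr => i _.
by rewrite /tens Ez -scalemxAr -scalemxAl trmx_mul !mulmxA.
Qed.

Lemma perfect_sublat_sym_tensor k k' (B : 'M[R]_(k, N)) (B' : 'M[R]_(k', N))
    (Z : 'M[R]_(k', k)) (a : 'M[R]_k') m :
  sublat B' B -> lat_min B' m -> lat_min B m -> perfect B' ->
  B' = Z *m B -> a^T = a -> in_min_span B (B^T *m (Z^T *m a *m Z) *m B).
Proof.
move=> subB minB' minB perfB' EB' sym_a.
apply: in_min_span_sub (fun w => min_vec_sublat (w := w) subB minB' minB) _.
by apply/perfB'/sym_tensorP; exists a; rewrite EB' trmx_mul !mulmxA.
Qed.

End LatticeTensors.

Lemma rat_row_clear_denominators n (y : 'rV[rat]_n) :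
  exists2 k : int, k != 0 & exists c : 'rV[int]_n, map_mx intr c = k%:~R *: y.
Proof.
exists (\prod_i denq (y 0 i)).
  by apply: lt0r_neq0; apply: prodr_gt0 => i _; exact: denq_gt0.
exists (\row_i (numq (y 0 i) * \prod_(j | j != i) denq (y 0 j))).
apply/matrixP => x i; rewrite !mxE ord1 [X in _ = X%:~R * _](bigD1 i) //=.
by rewrite !rmorphM /= numqE; ring.
Qed.

Section RationalCoordinates.
Variables (R : realFieldType) (N : nat).

Lemma map_mx_ratr_int m n (A : 'M[int]_(m, n)) :
  map_mx (ratr : rat -> R) (map_mx intr A) = map_mx intr A.
Proof. by apply/matrixP => i j; rewrite !mxE ratr_int. Qed.

Lemma coord_notin_sublat_span d k (B : 'M[R]_(d, N)) (B' : 'M[R]_(k, N))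
    (Z : 'M[int]_(k, d)) (z : 'rV[int]_d) (v : 'rV[R]_N) :
  B' = map_mx intr Z *m B -> v = map_mx intr z *m B -> v != 0 ->
  (forall q : rat, in_lat B' (ratr q *: v) -> ratr q *: v = 0) ->
  ~~ ((map_mx intr z : 'rV[R]_d) <= (map_mx intr Z : 'M[R]_(k, d)))%MS.
Proof.
move=> EB' Ev v_neq0 qv; apply/negP.
rewrite -(map_mx_ratr_int Z) -(map_mx_ratr_int z) map_submx => /mulmxKpV zZ.
have [k0 k0_neq0 [c Ec]] :=
  rat_row_clear_denominators (map_mx intr z *m pinvmx (map_mx intr Z)).
have kzQ : k0%:~R *: map_mx intr z = map_mx intr c *m map_mx (intr : int -> rat) Z.
  by rewrite Ec -scalemxAl zZ.
have := congr1 (map_mx (ratr : rat -> R)) kzQ.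
rewrite map_mxZ map_mxM !map_mx_ratr_int /= ratr_int => kz.
have : in_lat B' (ratr k0%:~R *: v).
  by apply/in_latP; exists c; rewrite ratr_int Ev scalemxAl kz EB' mulmxA.
by move/qv/eqP; rewrite scaler_eq0 ratr_int intr_eq0 (negPf k0_neq0) (negPf v_neq0).
Qed.

End RationalCoordinates.

Theorem corollary2p4 (R : realFieldType) (N d : nat)
    (B : 'M[R]_(d, N)) (B1 B2 : 'M[R]_(d.-1, N)) (m : R) (v : 'rV[R]_N) :
  lattice_basis B -> lat_min B m ->
  lattice_basis B1 -> lattice_basis B2 ->
  sublat B1 B -> sublat B2 B ->
  ~ same_lat B1 B2 ->
  perfect B1 -> perfect B2 ->
  lat_min B1 m -> lat_min B2 m ->
  \rank (col_mx B1 B2) = d ->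
  min_vec B v ->
  (forall q : rat, in_lat B1 (ratr q *: v) -> ratr q *: v = 0) ->
  (forall q : rat, in_lat B2 (ratr q *: v) -> ratr q *: v = 0) ->
  perfect B.
Proof.
move=> _ minB free1 free2 sub1 sub2 _ perf1 perf2 min1 min2 rkB v_min q1 q2.
have [Z1 E1] := sublat_coord sub1.
have [Z2 E2] := sublat_coord sub2.
have [/in_latP[z Ev] v_neq0 _] := v_min.
have zZ1 := coord_notin_sublat_span E1 Ev v_neq0 q1.
have zZ2 := coord_notin_sublat_span E2 Ev v_neq0 q2.
move: free1 free2 rkB; rewrite E1 E2 => /row_free_mulmxl free1 /row_free_mulmxl free2 rkB.
have d_gt0 : (0 < d)%N.
  apply: leq_trans (rank_leq_col (map_mx intr z : 'rV[R]_d)); rewrite lt0n mxrank_eq0.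
  by apply: contraNneq zZ1 => ->; rewrite sub0mx.
have Z21 := col_mx_rank_not_submx d_gt0 rkB.
move=> T; split; first exact: in_min_span_sym.
case/sym_tensorP => a [sym_a ->].
have [a1 [a2 [c [sym_a1 sym_a2 ->]]]] :=
  sym_decomp_hyperplanes free1 free2 Z21 zZ1 zZ2 sym_a.
rewrite !mulmxDr !mulmxDl; apply: in_min_spanD; first apply: in_min_spanD.
- exact: perfect_sublat_sym_tensor sub1 min1 minB perf1 E1 sym_a1.
- exact: perfect_sublat_sym_tensor sub2 min2 minB perf2 E2 sym_a2.
- have -> : B^T *m (c *: ((map_mx intr z)^T *m map_mx intr z)) *m B = c *: tens v.
    by rewrite /tens Ev -scalemxAr -scalemxAl trmx_mul !mulmxA.
  exact: in_min_span_tens.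
Qed.
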